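(* For any discrete random variable $X$, there exists a conditional distribution $p_{W|X}$ such that the resulting random variable $W$ has marginal distribution $\mathrm{Geom}(1/2)$ (i.e., $\mathbb{P}(W=w)=2^{-w}$ for $w=1,2,\dots$), and the conditional distribution $p_{X|W=w}$ is a dyadic distribution for all $w\ge1$.
   Context: A dyadic distribution is a probability distribution $p$ on a discrete set in which each nonzero probability $p(x)$ is an integer power of two. *)

From Stdlib Require Import Reals ZArith.
From Coquelicot Require Import Coquelicot.
Open Scope R_scope.

Definition is_pmf (p : nat -> R) : Prop :=
  (forall x, 0 <= p x) /\ is_series p 1.

Definition dyadic (p : nat -> R) : Prop :=
  forall x, p x <> 0 -> exists k : Z, p x = powerRZ 2 k.

(* A conditional distribution p_{W|X} with W taking values in {1,2,...}:
   for each x, q x is a pmf on nat with no mass at 0. *)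
Definition is_cond_dist_pos (q : nat -> nat -> R) : Prop :=
  forall x, is_pmf (q x) /\ q x 0%nat = 0.

Definition joint (p : nat -> R) (q : nat -> nat -> R) (x w : nat) : R := p x * q x w.

(** Peel [p] into layers.  A residual measure of total mass [2^-w] contains a
    sub-measure of mass [2^-(w+1)] all of whose atoms are powers of two: round
    each residual atom down to a power of two that is at most [2^-(w+1)]; the
    roundings carry more than half of the residual mass, so a finite prefix of
    them already has mass [2^-(w+1)], and among finitely many powers of two
    that are not too small one can select some that sum to exactly
    [2^-(w+1)].  The [w]-th layer is the joint law [P(X = x, W = w+1)].  The
    residuals have mass [2^-w], so the layers exhaust [p], and the posterior
    [P(X = x | W = w+1) = 2^(w+1) P(X = x, W = w+1)] is a power of two. *)

From Stdlib Require Import Reals ZArith Lra Lia.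
From Stdlib Require Import Classical ClassicalEpsilon.
From Coquelicot Require Import Coquelicot.
Open Scope R_scope.

Fixpoint sum_lt (f : nat -> R) (n : nat) : R :=
  match n with O => 0 | S n => sum_lt f n + f n end.

Lemma sum_n_sum_lt (f : nat -> R) (n : nat) : sum_n f n = sum_lt f (S n).
Proof.
  induction n as [|n IH]; [rewrite sum_O; simpl; lra|].
  rewrite sum_Sn, IH. reflexivity.
Qed.

Lemma sum_lt_ext (f g : nat -> R) (n : nat) :
  (forall x, (x < n)%nat -> f x = g x) -> sum_lt f n = sum_lt g n.
Proof.
  induction n as [|n IH]; intros Hfg; simpl; [reflexivity|].
  rewrite (Hfg n) by lia. rewrite IH; [reflexivity|].
  intros x Hx. apply Hfg. lia.
Qed.

Lemma sum_lt_plus (f g : nat -> R) (n : nat) :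
  sum_lt (fun x => f x + g x) n = sum_lt f n + sum_lt g n.
Proof. induction n as [|n IH]; simpl; [|rewrite IH]; ring. Qed.

Lemma sum_lt_minus (f g : nat -> R) (n : nat) :
  sum_lt (fun x => f x - g x) n = sum_lt f n - sum_lt g n.
Proof. induction n as [|n IH]; simpl; [|rewrite IH]; ring. Qed.

Lemma sum_lt_scal (c : R) (f : nat -> R) (n : nat) :
  sum_lt (fun x => c * f x) n = c * sum_lt f n.
Proof. induction n as [|n IH]; simpl; [|rewrite IH]; ring. Qed.

Lemma sum_lt_const0 (n : nat) : sum_lt (fun _ => 0) n = 0.
Proof. induction n as [|n IH]; simpl; [|rewrite IH]; ring. Qed.

Lemma sum_lt_nonneg (f : nat -> R) (n : nat) :
  (forall x, 0 <= f x) -> 0 <= sum_lt f n.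
Proof. intros Hf; induction n as [|n IH]; simpl; [lra|]. specialize (Hf n); lra. Qed.

Lemma sum_lt_le_mono (f : nat -> R) (m n : nat) :
  (forall x, 0 <= f x) -> (m <= n)%nat -> sum_lt f m <= sum_lt f n.
Proof. intros Hf Hmn; induction Hmn as [|n _ IH]; simpl; [lra|]. specialize (Hf n); lra. Qed.

Lemma sum_lt_ge_term (f : nat -> R) (n x : nat) :
  (forall x, 0 <= f x) -> (x < n)%nat -> f x <= sum_lt f n.
Proof.
  intros Hf Hx. apply Rle_trans with (sum_lt f (S x)).
  - simpl. pose proof (sum_lt_nonneg f x Hf); lra.
  - apply sum_lt_le_mono; assumption.
Qed.

Lemma sum_lt_single (f : nat -> R) (n x0 : nat) :
  (x0 < n)%nat -> sum_lt (fun x => if Nat.eqb x x0 then f x else 0) n = f x0.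
Proof.
  induction n as [|n IH]; intros Hx0; [lia|]. simpl.
  destruct (Nat.eqb_spec n x0) as [->|Hn].
  - rewrite (sum_lt_ext _ (fun _ => 0)), sum_lt_const0; [ring|].
    intros x Hx. destruct (Nat.eqb_spec x x0); [lia|reflexivity].
  - rewrite IH by lia. ring.
Qed.

Lemma sum_lt_pos_nonzero (f : nat -> R) (n : nat) :
  0 < sum_lt f n -> exists x, (x < n)%nat /\ f x <> 0.
Proof.
  induction n as [|n IH]; simpl; intros Hpos; [lra|].
  destruct (Req_dec (f n) 0) as [Hz|Hnz]; [|exists n; split; auto].
  destruct IH as [x [Hx Hfx]]; [lra|]. exists x; split; auto.
Qed.

(* Either some term is [c 2^(j+1)] itself, or all terms are at most [c 2^j]
   and two disjoint selections summing to [c 2^j] can be made in turn. *)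
Lemma subset_sum_eq_pow2 (c : R) (j : nat) : 0 < c ->
  forall (n : nat) (a : nat -> R),
  (forall x, (x < n)%nat -> a x = 0 \/ exists e, (e <= j)%nat /\ a x = c * 2 ^ e) ->
  c * 2 ^ j <= sum_lt a n ->
  exists s : nat -> bool, sum_lt (fun x => if s x then a x else 0) n = c * 2 ^ j.
Proof.
  intros Hc. induction j as [|j IH]; intros n a Ha Hsum.
  - destruct (sum_lt_pos_nonzero a n) as [x [Hx Hax]]; [simpl in Hsum; lra|].
    exists (fun y => Nat.eqb y x). rewrite sum_lt_single by exact Hx.
    destruct (Ha x Hx) as [|[e [He ->]]]; [contradiction|].
    replace e with 0%nat by lia. reflexivity.
  - destruct (classic (exists x, (x < n)%nat /\ a x = c * 2 ^ S j))
      as [[x [Hx Hax]]|Hnone].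
    { exists (fun y => Nat.eqb y x). rewrite sum_lt_single; assumption. }
    assert (Ha' : forall x, (x < n)%nat ->
              a x = 0 \/ exists e, (e <= j)%nat /\ a x = c * 2 ^ e).
    { intros x Hx. destruct (Ha x Hx) as [|[e [He Hax]]]; [now left|right].
      exists e. split; [|exact Hax].
      destruct (Nat.eq_dec e (S j)) as [->|]; [|lia].
      exfalso; apply Hnone; eauto. }
    assert (Hpow : c * 2 ^ S j = 2 * (c * 2 ^ j)) by (simpl; ring).
    pose proof (pow_lt 2 j ltac:(lra)).
    destruct (IH n a Ha') as [s1 Hs1]; [nra|].
    set (a' := fun x => if s1 x then 0 else a x).
    assert (Hsum' : sum_lt a' n = sum_lt a n - c * 2 ^ j).
    { rewrite <- Hs1, <- sum_lt_minus. apply sum_lt_ext. intros x _.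
      unfold a'. destruct (s1 x); ring. }
    destruct (IH n a') as [s2 Hs2].
    { intros x Hx. unfold a'. destruct (s1 x); [now left|exact (Ha' x Hx)]. }
    { nra. }
    exists (fun x => orb (s1 x) (s2 x)).
    rewrite (sum_lt_ext _ (fun x => (if s1 x then a x else 0)
                                 + (if s2 x then a' x else 0))).
    + rewrite sum_lt_plus, Hs1, Hs2, Hpow. ring.
    + intros x _. unfold a'. destruct (s1 x), (s2 x); simpl; ring.
Qed.

Lemma sum_lt_le_series (a : nat -> R) (l : R) :
  (forall x, 0 <= a x) -> is_series a l -> forall n, sum_lt a n <= l.
Proof.
  intros Ha Hl.
  assert (Hpartial : forall n, sum_n a n <= l).
  { apply is_lim_seq_incr_compare; [exact Hl|].
    intros n. rewrite sum_Sn. unfold plus; simpl. specialize (Ha (S n)); lra. }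
  intros [|n].
  - simpl. specialize (Hpartial 0%nat). rewrite sum_O in Hpartial.
    specialize (Ha 0%nat); lra.
  - rewrite <- sum_n_sum_lt. apply Hpartial.
Qed.

Lemma sum_lt_approx_series (a : nat -> R) (l eps : R) :
  is_series a l -> 0 < eps -> exists n, l - eps < sum_lt a n.
Proof.
  intros Hl Heps. assert (Hlim : is_lim_seq (sum_n a) l) by exact Hl.
  apply is_lim_seq_spec in Hlim.
  destruct (Hlim (mkposreal eps Heps)) as [N HN].
  specialize (HN N (le_n N)). simpl in HN. apply Rabs_def2 in HN.
  exists (S N). rewrite <- sum_n_sum_lt. lra.
Qed.

Lemma is_series_finite_support (a : nat -> R) (n : nat) :
  (forall x, (n <= x)%nat -> a x = 0) -> is_series a (sum_lt a n).
Proof.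
  intros Ha. apply filterlim_ext_loc with (fun _ => sum_lt a n);
    [|apply filterlim_const].
  exists n. intros m Hm. rewrite sum_n_sum_lt.
  induction Hm as [|m Hm IH]; simpl in *.
  - rewrite Ha by lia. ring.
  - rewrite IH, (Ha (S m)) by lia. ring.
Qed.

Lemma pow2_pos (n : nat) : 0 < 2 ^ n.
Proof. apply pow_lt; lra. Qed.

Lemma inv_pow2_pos (n : nat) : 0 < / 2 ^ n.
Proof. apply Rinv_0_lt_compat, pow2_pos. Qed.

Lemma inv_pow2_le (m n : nat) : (m <= n)%nat -> / 2 ^ n <= / 2 ^ m.
Proof.
  intros Hmn. apply Rinv_le_contravar; [apply pow2_pos|].
  apply Rle_pow; [lra|exact Hmn].
Qed.

Lemma inv_pow2_S (n : nat) : / 2 ^ n = 2 * / 2 ^ S n.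
Proof. pose proof (pow2_pos n). simpl. field. lra. Qed.

Lemma inv_pow2_scale (k n : nat) : (k <= n)%nat -> / 2 ^ n * 2 ^ (n - k) = / 2 ^ k.
Proof.
  intros Hkn. replace n with (k + (n - k))%nat at 1 by lia. rewrite pow_add.
  pose proof (pow2_pos k). pose proof (pow2_pos (n - k)). field. lra.
Qed.

Lemma inv_pow2_div (k n : nat) :
  / 2 ^ k / / 2 ^ n = powerRZ 2 (Z.of_nat n - Z.of_nat k).
Proof.
  unfold Z.sub. rewrite powerRZ_add, powerRZ_neg', <- !pow_powerRZ by lra.
  pose proof (pow2_pos k). pose proof (pow2_pos n). field. lra.
Qed.

Lemma dyadic_floor (m : nat) (p : R) :
  0 < p < / 2 ^ m -> exists k, (m <= k)%nat /\ / 2 ^ k <= p < 2 * / 2 ^ k.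
Proof.
  intros Hp.
  assert (Hsmall : exists n, / 2 ^ n <= p).
  { destruct (pow_lt_1_zero (/ 2) ltac:(rewrite Rabs_pos_eq; lra) p ltac:(lra))
      as [N HN].
    exists N. specialize (HN N (le_n N)).
    rewrite pow_inv, Rabs_pos_eq in HN by apply Rlt_le, inv_pow2_pos. lra. }
  destruct Hsmall as [n Hn]. induction n as [|n IH].
  - pose proof (inv_pow2_le 0 m (Nat.le_0_l m)). simpl in *. lra.
  - destruct (Rle_lt_dec (/ 2 ^ n) p) as [Hle|Hlt]; [exact (IH Hle)|].
    exists (S n). rewrite <- inv_pow2_S. split; [|lra].
    destruct (le_lt_dec m (S n)) as [|Hlt']; [assumption|].
    pose proof (inv_pow2_le (S n) m (Nat.lt_le_incl _ _ Hlt')). lra.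
Qed.

Lemma capped_dyadic_floor (m : nat) (p : R) : 0 <= p -> exists y,
  0 <= y <= p /\ (y = 0 \/ exists k, (m <= k)%nat /\ y = / 2 ^ k) /\
  (/ 2 ^ m <= p -> y = / 2 ^ m) /\ (0 < p < / 2 ^ m -> p < 2 * y).
Proof.
  intros Hp. pose proof (inv_pow2_pos m).
  destruct (Rle_lt_dec (/ 2 ^ m) p) as [Hcap|Hbelow].
  { exists (/ 2 ^ m). repeat split; try lra.
    right. exists m. auto. }
  destruct (Req_dec p 0) as [Hz|Hnz].
  { exists 0. repeat split; lra. }
  destruct (dyadic_floor m p) as [k [Hk Hfloor]]; [lra|].
  pose proof (inv_pow2_pos k).
  exists (/ 2 ^ k). repeat split; try lra.
  right. exists k. auto.
Qed.

Lemma half_sum_reached (r g : nat -> R) (t : R) :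
  0 < t -> (forall x, 0 <= r x) -> is_series r (2 * t) -> (forall x, 0 <= g x) ->
  (forall x, t <= r x -> t <= g x) -> (forall x, 0 < r x < t -> r x < 2 * g x) ->
  exists n, t <= sum_lt g n.
Proof.
  intros Ht Hr Hsum Hg Hbig Hsmall.
  destruct (classic (exists x, t <= r x)) as [[x Hx]|Hnone].
  { exists (S x). apply Rle_trans with (g x); [auto|].
    apply sum_lt_ge_term; auto. }
  assert (Hlt : forall x, r x < t).
  { intros x. apply Rnot_le_lt. intros Hx. apply Hnone. eauto. }
  assert (Hdom : forall x, 0 <= 2 * g x - r x).
  { intros x. destruct (Req_dec (r x) 0) as [Hz|Hnz].
    - rewrite Hz. specialize (Hg x). lra.
    - assert (Hrx : 0 < r x < t) by (specialize (Hr x); specialize (Hlt x); lra).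
      specialize (Hsmall x Hrx). lra. }
  destruct (sum_lt_approx_series r (2 * t) t Hsum Ht) as [n1 Hn1].
  destruct (sum_lt_pos_nonzero r n1) as [x0 [Hx0 Hnz0]]; [lra|].
  set (c := 2 * g x0 - r x0).
  assert (Hc : 0 < c).
  { assert (Hrx0 : 0 < r x0 < t) by (specialize (Hr x0); specialize (Hlt x0); lra).
    specialize (Hsmall x0 Hrx0). unfold c. lra. }
  destruct (sum_lt_approx_series r (2 * t) c Hsum Hc) as [n2 Hn2].
  exists (n1 + n2)%nat.
  pose proof (sum_lt_ge_term _ (n1 + n2) x0 Hdom ltac:(lia)) as Hterm.
  rewrite sum_lt_minus, sum_lt_scal in Hterm.
  pose proof (sum_lt_le_mono r n2 (n1 + n2) Hr ltac:(lia)).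
  fold c in Hterm. lra.
Qed.

Lemma prefix_exponent_bound (g : nat -> R) (m n : nat) :
  (forall x, g x = 0 \/ exists k, (m <= k)%nat /\ g x = / 2 ^ k) ->
  exists K, (m <= K)%nat /\ forall x, (x < n)%nat ->
    g x = 0 \/ exists k, (m <= k <= K)%nat /\ g x = / 2 ^ k.
Proof.
  intros Hg. induction n as [|n [K [HmK HK]]].
  { exists m. split; [lia|]. intros x Hx; lia. }
  destruct (Hg n) as [Hz|[k [Hk Hgk]]].
  - exists K. split; [exact HmK|]. intros x Hx.
    destruct (Nat.eq_dec x n) as [->|]; [now left|]. apply HK. lia.
  - exists (Nat.max K k). split; [lia|]. intros x Hx.
    destruct (Nat.eq_dec x n) as [->|].
    + right. exists k. split; [lia|exact Hgk].
    + destruct (HK x ltac:(lia)) as [|[k' [Hk' Hgk']]]; [now left|right].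
      exists k'. split; [lia|exact Hgk'].
Qed.

Definition dyadic_layer (r : nat -> R) (m : nat) (d : nat -> R) : Prop :=
  (forall x, 0 <= d x <= r x) /\ is_series d (/ 2 ^ S m) /\
  (forall x, d x <> 0 -> exists k, d x = / 2 ^ k).

Lemma dyadic_layer_exists (r : nat -> R) (m : nat) :
  (forall x, 0 <= r x) -> is_series r (/ 2 ^ m) -> exists d, dyadic_layer r m d.
Proof.
  intros Hr Hsum.
  destruct (choice (fun x y => 0 <= y <= r x /\
      (y = 0 \/ exists k, (S m <= k)%nat /\ y = / 2 ^ k) /\
      (/ 2 ^ S m <= r x -> y = / 2 ^ S m) /\
      (0 < r x < / 2 ^ S m -> r x < 2 * y))) as [g Hg].
  { intros x. apply capped_dyadic_floor, Hr. }
  destruct (half_sum_reached r g (/ 2 ^ S m)) as [n Hn].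
  - apply inv_pow2_pos.
  - exact Hr.
  - rewrite <- inv_pow2_S. exact Hsum.
  - intros x. destruct (Hg x) as [? _]. lra.
  - intros x Hx. destruct (Hg x) as [_ [_ [Hcap _]]]. rewrite (Hcap Hx). lra.
  - intros x. destruct (Hg x) as [_ [_ [_ Hhalf]]]. exact Hhalf.
  - destruct (prefix_exponent_bound g (S m) n) as [K [HmK HK]];
      [intros x; destruct (Hg x) as [_ [Hpow _]]; exact Hpow|].
    destruct (subset_sum_eq_pow2 (/ 2 ^ K) (K - S m) (inv_pow2_pos K) n g)
      as [s Hs].
    + intros x Hx. destruct (HK x Hx) as [|[k [Hk Hgk]]]; [now left|right].
      exists (K - k)%nat. split; [lia|]. rewrite inv_pow2_scale by lia. exact Hgk.
    + rewrite inv_pow2_scale by exact HmK. exact Hn.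
    + rewrite inv_pow2_scale in Hs by exact HmK.
      exists (fun x => if Nat.ltb x n then if s x then g x else 0 else 0).
      split; [|split].
      * intros x. destruct (Hg x) as [? _]. destruct (Nat.ltb x n), (s x); lra.
      * rewrite <- Hs. erewrite sum_lt_ext; [apply is_series_finite_support|].
        -- intros x Hx. destruct (Nat.ltb_spec x n); [lia|reflexivity].
        -- intros x Hx. simpl. destruct (Nat.ltb_spec x n); [reflexivity|lia].
      * intros x Hx. destruct (Nat.ltb x n), (s x); try (exfalso; lra).
        destruct (Hg x) as [_ [[Hz|[k [_ Hgk]]] _]]; [contradiction|eauto].
Qed.

Lemma dyadic_layer_function : exists extract : (nat -> R) -> nat -> nat -> R,
  forall r m, (forall x, 0 <= r x) -> is_series r (/ 2 ^ m) ->
  dyadic_layer r m (extract r m).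
Proof.
  destruct (choice (fun (rm : (nat -> R) * nat) d =>
      (forall x, 0 <= fst rm x) -> is_series (fst rm) (/ 2 ^ snd rm) ->
      dyadic_layer (fst rm) (snd rm) d)) as [F HF].
  { intros [r m]. simpl.
    destruct (classic ((forall x, 0 <= r x) /\ is_series r (/ 2 ^ m)))
      as [[Hr Hsum]|Hpre].
    - destruct (dyadic_layer_exists r m Hr Hsum) as [d Hd]. eauto.
    - exists (fun _ => 0). tauto. }
  exists (fun r m => F (r, m)). intros r m. exact (HF (r, m)).
Qed.

Section Peeling.

Variable p : nat -> R.
Hypothesis p_nonneg : forall x, 0 <= p x.
Hypothesis p_sum : is_series p 1.
Variable extract : (nat -> R) -> nat -> nat -> R.
Hypothesis extract_layer : forall r m, (forall x, 0 <= r x) ->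
  is_series r (/ 2 ^ m) -> dyadic_layer r m (extract r m).

Fixpoint residual (w : nat) : nat -> R :=
  match w with
  | O => p
  | S w => fun x => residual w x - extract (residual w) w x
  end.

Definition layer (w : nat) : nat -> R := extract (residual w) w.

Lemma residual_spec (w : nat) :
  (forall x, 0 <= residual w x) /\ is_series (residual w) (/ 2 ^ w).
Proof.
  induction w as [|w [Hnn Hsum]]; simpl.
  - split; [exact p_nonneg|]. replace (/ 1) with 1 by field. exact p_sum.
  - destruct (extract_layer _ _ Hnn Hsum) as [Hle [Hlayer _]]. split.
    + intros x. specialize (Hle x). lra.
    + replace (/ (2 * 2 ^ w)) with (/ 2 ^ w - / 2 ^ S w)
        by (rewrite (inv_pow2_S w); simpl; ring).
      exact (is_series_minus _ _ _ _ Hsum Hlayer).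
Qed.

Lemma layer_spec (w : nat) : dyadic_layer (residual w) w (layer w).
Proof. destruct (residual_spec w) as [Hnn Hsum]. exact (extract_layer _ _ Hnn Hsum). Qed.

Lemma layer_le (w x : nat) : 0 <= layer w x <= p x.
Proof.
  assert (Hres : forall v, residual v x <= p x).
  { intros v. induction v as [|v IH]; simpl; [lra|].
    destruct (layer_spec v) as [Hle _]. specialize (Hle x). unfold layer in Hle. lra. }
  destruct (layer_spec w) as [Hle _]. specialize (Hle x). specialize (Hres w). lra.
Qed.

Lemma residual_le_inv_pow2 (w x : nat) : residual w x <= / 2 ^ w.
Proof.
  destruct (residual_spec w) as [Hnn Hsum].
  apply Rle_trans with (sum_lt (residual w) (S x)).
  - apply sum_lt_ge_term; auto.
  - apply sum_lt_le_series; assumption.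
Qed.

Lemma layer_series (x : nat) : is_series (fun w => layer w x) (p x).
Proof.
  assert (Htelescope : forall n, sum_n (fun w => layer w x) n = p x - residual (S n) x).
  { induction n as [|n IH].
    - rewrite sum_O. unfold layer. simpl. ring.
    - rewrite sum_Sn, IH. unfold plus, layer. simpl. ring. }
  assert (Hlim : is_lim_seq (fun n => p x - residual (S n) x) (p x - 0)).
  { apply is_lim_seq_minus'; [apply is_lim_seq_const|].
    apply is_lim_seq_le_le with (fun _ => 0) (fun n => (/ 2) ^ n).
    - intros n. split; [apply (residual_spec (S n))|].
      rewrite pow_inv. apply Rle_trans with (/ 2 ^ S n).
      + apply residual_le_inv_pow2.
      + apply inv_pow2_le. lia.
    - apply is_lim_seq_const.
    - apply is_lim_seq_geom. rewrite Rabs_pos_eq; lra. }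
  rewrite Rminus_0_r in Hlim.
  apply (is_lim_seq_ext _ _ _ (fun n => eq_sym (Htelescope n)) Hlim).
Qed.

End Peeling.

(* Where [p x = 0] the conditional law of [W] is irrelevant; we take
   [Geom(1/2)] there so that it is still a probability mass function. *)
Definition cond_of_layers (p : nat -> R) (d : nat -> nat -> R) (x w : nat) : R :=
  match w with
  | O => 0
  | S w => if Req_dec_T (p x) 0 then / 2 ^ S w else d w x / p x
  end.

Lemma is_series_inv_pow2_S : is_series (fun w => / 2 ^ S w) 1.
Proof.
  assert (Hgeom := is_series_scal (/ 2) _ _
                     (is_series_geom (/ 2) ltac:(rewrite Rabs_pos_eq; lra))).
  replace 1 with (scal (/ 2) (/ (1 - / 2))) by (unfold scal; simpl; unfold mult; simpl; field).
  eapply is_series_ext; [|exact Hgeom]. intros n.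
  unfold scal; simpl; unfold mult; simpl. rewrite pow_inv, Rinv_mult. reflexivity.
Qed.

Lemma is_series_shift0 (a : nat -> R) (l : R) :
  is_series a l -> is_series (fun w => match w with O => 0 | S w => a w end) l.
Proof.
  intros Hl. apply is_series_decr_1. unfold plus, opp; simpl.
  rewrite Ropp_0, Rplus_0_r. exact Hl.
Qed.

Lemma cond_of_layers_dist (p : nat -> R) (d : nat -> nat -> R) :
  (forall x, 0 <= p x) -> (forall w x, 0 <= d w x) ->
  (forall x, is_series (fun w => d w x) (p x)) ->
  is_cond_dist_pos (cond_of_layers p d).
Proof.
  intros Hp Hd Hsum x. split; [split|reflexivity].
  - intros [|w]; simpl; [lra|].
    destruct (Req_dec_T (p x) 0) as [Hz|Hnz]; [exact (Rlt_le _ _ (inv_pow2_pos (S w)))|].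
    apply Rmult_le_pos; [apply Hd|].
    apply Rlt_le, Rinv_0_lt_compat. destruct (Hp x); [assumption|congruence].
  - apply is_series_shift0. destruct (Req_dec_T (p x) 0) as [Hz|Hnz].
    + exact is_series_inv_pow2_S.
    + replace 1 with (scal (/ p x) (p x)) by (unfold scal; simpl; unfold mult; simpl; field; exact Hnz).
      eapply is_series_ext; [|exact (is_series_scal _ _ _ (Hsum x))]. intros n.
      unfold scal; simpl; unfold mult; simpl. unfold Rdiv. ring.
Qed.

Lemma joint_cond_of_layers (p : nat -> R) (d : nat -> nat -> R) (x w : nat) :
  (p x = 0 -> d w x = 0) -> joint p (cond_of_layers p d) x (S w) = d w x.
Proof.
  intros Hd. unfold joint, cond_of_layers.
  destruct (Req_dec_T (p x) 0) as [Hz|Hnz].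
  - rewrite Hz, (Hd Hz). ring.
  - field. exact Hnz.
Qed.

Lemma dyadic_div_inv_pow2 (f : nat -> R) (n : nat) :
  (forall x, f x <> 0 -> exists k, f x = / 2 ^ k) -> dyadic (fun x => f x / / 2 ^ n).
Proof.
  intros Hf x Hx.
  destruct (Hf x) as [k Hk].
  { intros Hz. apply Hx. rewrite Hz. unfold Rdiv. ring. }
  exists (Z.of_nat n - Z.of_nat k)%Z. rewrite Hk. apply inv_pow2_div.
Qed.

Theorem lemma1 (pX : nat -> R) (HpX : is_pmf pX) :
  exists q : nat -> nat -> R,
    is_cond_dist_pos q /\
    (* marginal of W is Geom(1/2): P(W = w) = 2^{-w} for w >= 1 *)
    (forall w : nat, (1 <= w)%nat -> is_series (fun x => joint pX q x w) (/ 2 ^ w)) /\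
    (* p_{X|W=w}(x) = P(X=x, W=w) / P(W=w) is dyadic for every w >= 1 *)
    (forall w : nat, (1 <= w)%nat -> dyadic (fun x => joint pX q x w / (/ 2 ^ w))).
Proof.
  destruct HpX as [Hnn Hsum].
  destruct dyadic_layer_function as [extract Hextract].
  pose proof (layer_le pX Hnn Hsum extract Hextract) as Hle.
  pose proof (layer_spec pX Hnn Hsum extract Hextract) as Hlayer.
  pose proof (layer_series pX Hnn Hsum extract Hextract) as Hseries.
  set (d := layer pX extract) in *.
  assert (Hjoint : forall x w, joint pX (cond_of_layers pX d) x (S w) = d w x).
  { intros x w. apply joint_cond_of_layers. intros Hz.
    specialize (Hle w x). lra. }
  exists (cond_of_layers pX d). split; [|split].
  - apply cond_of_layers_dist; [exact Hnn| |exact Hseries].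
    intros w x. apply Hle.
  - intros [|w] Hw; [lia|].
    destruct (Hlayer w) as [_ [Hmass _]].
    apply (is_series_ext _ _ _ (fun x => eq_sym (Hjoint x w)) Hmass).
  - intros [|w] Hw; [lia|].
    destruct (Hlayer w) as [_ [_ Hdyadic]].
    intros x. rewrite Hjoint. exact (dyadic_div_inv_pow2 (d w) (S w) Hdyadic x).
Qed.
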